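(* For every integer $n\ge1$, $$\sum_{d\mid n,\ d'\mid n} c_d\Big(\frac{n}{d'}\Big)c_{d'}\Big(\frac{n}{d}\Big)=n\,\tau(n),$$ where the sum runs over all ordered pairs $(d,d')$ of positive divisors of $n$.
   Context: For integers $m\ge1$ and $x$, the Ramanujan sum is $c_m(x)=\sum_{1\le j\le m,\ (j,m)=1} e^{2\pi i jx/m}$. $\tau(n)$ is the number of positive divisors of $n$. *)

From mathcomp Require Import all_boot all_order all_algebra all_field.
Set Implicit Arguments. Unset Strict Implicit. Unset Printing Implicit Defensive.
Import Order.TTheory GRing.Theory Num.Theory.
Local Open Scope ring_scope.

(* zeta m = exp(2 pi i / m) in algC: m.-root (-1) is the m-th root of -1 with
   minimal nonnegative argument, i.e. exp(i pi / m). *)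
Definition zeta (m : nat) : algC := (m.-root (-1)) ^+ 2.

Definition ramanujan (m : nat) (x : int) : algC :=
  \sum_(1 <= j < m.+1 | coprime j m) zeta m ^ (j%:Z * x).

Definition tau (n : nat) : nat := size (divisors n).

From mathcomp Require Import all_boot all_order all_algebra all_field.
From mathcomp Require Import lra.
Set Implicit Arguments. Unset Strict Implicit. Unset Printing Implicit Defensive.
Import Order.TTheory GRing.Theory Num.Theory.
Local Open Scope ring_scope.

(* The Ramanujan sum [c_e(x)] is the sum of the [x]-th powers of the primitive
   [e]-th roots of unity, and every [n]-th root of unity [zeta^b] is primitive of
   order [n / (b, n)]. For fixed [d | n] this turns the sum over [d'] into
   [sum_(b < n) c_d((b, n)) zeta^(b n / d)]; since [c_d(x)] only depends on
   [(x, d)], expanding [c_d] gives one geometric sum of length [n] per primitive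
   [d]-th root, and exactly one of them is not zero. Each of the [tau n] divisors
   [d] thus contributes [n].
   That [zeta m] is a primitive [m]-th root of unity needs an argument, since
   [m.-root (-1)] is only characterised as the [m]-th root of [-1] of maximal
   real part in the upper half-plane: a descent that repeatedly rotates by it
   shows that it generates all [2m]-th roots of unity. *)

Lemma unit_circle_rotation (R : realFieldType) (x1 y1 x2 y2 : R) :
    x1 ^+ 2 + y1 ^+ 2 = 1 -> x2 ^+ 2 + y2 ^+ 2 = 1 -> 0 <= y1 -> 0 <= y2 ->
    x2 < 1 -> x1 <= x2 ->
  0 <= y1 * x2 - x1 * y2 /\ x1 < x1 * x2 + y1 * y2.
Proof.
move=> e1 e2 y1_ge0 y2_ge0 x2_lt1 x12.
have sqr_le (a b : R) : 0 <= a -> 0 <= b -> a ^+ 2 <= b ^+ 2 -> a <= b.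
  by move=> *; nra.
have [x1_ge0 | x1_lt0] := lerP 0 x1.
  have y21 : y2 <= y1 by apply: sqr_le => //; nra.
  split; first nra.
  have : y2 ^+ 2 <= y1 * y2 by nra.
  nra.
split; last nra.
have [x2_ge0 | x2_lt0] := lerP 0 x2; first nra.
have y12 : y1 <= y2 by apply: sqr_le => //; nra.
nra.
Qed.

(* Multiplying [a] by [g^*] rotates it clockwise by the argument of [g], which
   is at most that of [a]: the result stays in the closed upper half-plane and
   moves strictly closer to [1]. *)
Lemma upper_mul_conjC (a g : algC) :
    `|a| = 1 -> `|g| = 1 -> 0 <= 'Im a -> 0 <= 'Im g -> 'Re g < 1 ->
    'Re a <= 'Re g ->
  0 <= 'Im (a * g^*) /\ 'Re a < 'Re (a * g^*).
Proof.
move=> a1 g1 Ia_ge0 Ig_ge0 Rg_lt1 Rag.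
rewrite ImM ReM Re_conj Im_conj !mulrN opprK addrC (mulrC ('Re g)).
have circle z : `|z| = 1 -> in_algR (Creal_Re z) ^+ 2 + in_algR (Creal_Im z) ^+ 2 = 1.
  by move=> z1; apply: val_inj; rewrite /= -!expr2 -normC2_Re_Im z1 expr1n.
exact: unit_circle_rotation (circle a a1) (circle g g1) Ia_ge0 Ig_ge0 Rg_lt1 Rag.
Qed.

Lemma unity_root_norm1 (R : numDomainType) (z : R) N : (0 < N)%N -> z ^+ N = 1 -> `|z| = 1.
Proof.
move=> N_gt0 zN; apply/eqP; rewrite -(pexpr_eq1 N_gt0) ?normr_ge0 //.
by rewrite -normrX zN normr1.
Qed.

Lemma Re_lt1_norm1 (C : numClosedFieldType) (g : C) : `|g| = 1 -> g != 1 -> 'Re g < 1.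
Proof.
move=> g1 g_neq1; rewrite -g1 (lt_leif (leif_Re_Creal g)).
by apply: contra g_neq1 => /ger0_norm <-; rewrite g1.
Qed.

Section RootCN1.

Variable m : nat.
Hypothesis m_gt0 : (0 < m)%N.

Let y : algC := m.-root (-1).
Let N := (2 * m)%N.
Let N_gt0 : (0 < N)%N. Proof. by rewrite /N muln_gt0. Qed.

Let ym : y ^+ m = -1. Proof. exact: rootCK. Qed.
Let yN : y ^+ N = 1. Proof. by rewrite /N mulnC exprM ym sqrrN expr1n. Qed.
Let y_norm : `|y| = 1. Proof. exact: unity_root_norm1 N_gt0 yN. Qed.
Let Iy_ge0 : 0 <= 'Im y.
Proof.
rewrite /y; have [m_gt1 | m_le1] := ltnP 1 m; first exact: Im_rootC_ge0.
have -> : m = 1%N by apply/eqP; rewrite eqn_leq m_le1.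
by rewrite root1C (Creal_ImP _ _) ?rpredN1.
Qed.
Let Ry_lt1 : 'Re y < 1.
Proof.
apply: Re_lt1_norm1 => //; apply/eqP => y1; move/eqP: ym.
by rewrite y1 expr1n -subr_eq0 opprK (pnatr_eq0 _ 2).
Qed.

Let Re_le_root z : z ^+ N = 1 -> 0 <= 'Im z -> z != 1 -> 'Re z <= 'Re y.
Proof.
move=> zN Iz_ge0 z_neq1.
have : (z ^+ m) ^+ 2 == 1 by rewrite -exprM mulnC zN.
rewrite sqrf_eq1 => /orP[/eqP zm | /eqP zm]; last exact: rootC_Re_max.
have z_norm := unity_root_norm1 N_gt0 zN.
rewrite real_leNgt ?Creal_Re //; apply/negP => Ryz.
have [I_ge0 Ry_lt] := upper_mul_conjC y_norm z_norm Iy_ge0 Iz_ge0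
  (Re_lt1_norm1 z_norm z_neq1) (ltW Ryz).
have yzm : (y * z^*) ^+ m = -1 by rewrite exprMn -rmorphXn zm rmorph1 mulr1.
by have := lt_le_trans Ry_lt (rootC_Re_max m_gt0 yzm I_ge0); rewrite ltxx.
Qed.

(* Descent: [z * y^*] is again an upper [N]-th root of unity with a larger real
   part, and there are only finitely many [N]-th roots of unity. *)
Let upper_unity_root_expr z : z ^+ N = 1 -> 0 <= 'Im z -> exists i, z = y ^+ i.
Proof.
have [h h_prim] := C_prim_root_exists N_gt0.
pose above z := #|[set i : 'I_N | 'Re z < 'Re (h ^+ i)]|.
have [k] := ubnP (above z); elim: k z => // k IHk z lt_z_k zN Iz_ge0.
have [-> | z_neq1] := eqVneq z 1; first by exists 0%N.
have z_norm := unity_root_norm1 N_gt0 zN.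
have [Iw_ge0 Rzw] := upper_mul_conjC z_norm y_norm Iz_ge0 Iy_ge0 Ry_lt1
  (Re_le_root zN Iz_ge0 z_neq1).
set w := z * y^* in Iw_ge0 Rzw.
have wN : w ^+ N = 1 by rewrite exprMn -rmorphXn yN rmorph1 mulr1.
have lt_w_z : (above w < above z)%N.
  apply/proper_card/properP; split.
    by apply/subsetP => i; rewrite !inE; apply: lt_trans.
  have [i wi] := prim_rootP h_prim wN.
  by exists i; rewrite !inE -wi ?ltxx.
have [i wi] := IHk w (leq_trans lt_w_z lt_z_k) wN Iw_ge0.
exists i.+1; rewrite exprSr -wi -mulrA [y^* * y]mulrC.
by rewrite -normCK y_norm expr1n mulr1.
Qed.

Lemma rootCN1_prim_root : N.-primitive_root y.
Proof.
have [h h_prim] := C_prim_root_exists N_gt0.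
have hN := prim_expr_order h_prim.
have [j hj] : exists j, h = y ^+ j.
  have [Ih_ge0 | Ih_lt0] := real_ge0P (Creal_Im h).
    exact: upper_unity_root_expr.
  have hcN : h^* ^+ N = 1 by rewrite -rmorphXn hN rmorph1.
  have Ihc_ge0 : 0 <= 'Im h^* by rewrite Im_conj oppr_ge0 ltW.
  have [i hci] := upper_unity_root_expr hcN Ihc_ge0.
  have yc : y^* = y ^+ N.-1.
    apply: (mulfI (x := y)); first by rewrite -normr_eq0 y_norm oner_eq0.
    by rewrite -normCK y_norm expr1n -exprS prednK.
  have -> : h = y^* ^+ i by rewrite -rmorphXn -hci; exact: esym (conjCK h).
  by exists (N.-1 * i)%N; rewrite yc -exprM.
have [k k_prim k_dvd] := prim_order_exists N_gt0 yN.
suff -> : N = k by [].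
apply/eqP; rewrite eqn_dvd k_dvd (prim_order_dvd h_prim) hj.
by rewrite exprAC (prim_expr_order k_prim) expr1n eqxx.
Qed.

End RootCN1.

Lemma zeta_prim_root m : (0 < m)%N -> m.-primitive_root (zeta m).
Proof.
move=> m_gt0; have := dvdn_prim_root (rootCN1_prim_root m_gt0) (dvdn_mull 2 (dvdnn m)).
by rewrite mulnK.
Qed.

Lemma eq_prim_root_order (R : nzRingType) n n' (z : R) :
  n.-primitive_root z -> n'.-primitive_root z -> n = n'.
Proof.
move=> z_prim z_prim'; apply/eqP; rewrite eqn_dvd.
by rewrite (prim_order_dvd z_prim) (prim_expr_order z_prim') (prim_order_dvd z_prim')
  (prim_expr_order z_prim) eqxx.
Qed.

Lemma sum_unity_root_expr (R : idomainType) (u : R) n :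
  u ^+ n = 1 -> \sum_(0 <= b < n) u ^+ b = (u == 1)%:R * n%:R.
Proof.
move=> un; rewrite big_mkord; have [-> | u_neq1] := eqVneq u 1.
  by rewrite mul1r (eq_bigr (fun=> 1)) => [|i _]; rewrite ?expr1n // sumr_const card_ord.
rewrite mul0r; apply/eqP; move/eqP: (subrX1 u n).
by rewrite un subrr eq_sym mulf_eq0 subr_eq0 (negbTE u_neq1).
Qed.

Definition prim_roots m :=
  [seq zeta m ^+ j | j <- index_iota 1 m.+1 & coprime j m].

Definition unity_roots n := [seq zeta n ^+ b | b <- index_iota 0 n].

Lemma ramanujanE m (x : nat) : ramanujan m x%:Z = \sum_(z <- prim_roots m) z ^+ x.
Proof.
rewrite big_map big_filter; apply: eq_bigr => j _.
by rewrite -PoszM -exprM.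
Qed.

Lemma mem_prim_roots m z : (0 < m)%N -> (z \in prim_roots m) = m.-primitive_root z.
Proof.
move=> m_gt0; have zeta_prim := zeta_prim_root m_gt0.
apply/mapP/idP => [[j] | z_prim].
  by rewrite mem_filter => /andP[j_cop _] ->; rewrite prim_root_exp_coprime.
have [i zi] := prim_rootP zeta_prim (prim_expr_order z_prim).
have i_cop : coprime i m by rewrite -(prim_root_exp_coprime _ zeta_prim) -zi.
have [i0 | i_gt0] := posnP i.
  (* [zeta m ^+ 0] is listed as [zeta m ^+ m]. *)
  exists m; last by rewrite (prim_expr_order zeta_prim) zi i0.
  by move: i_cop; rewrite i0 /coprime gcd0n mem_filter mem_index_iota => /eqP ->.
exists (nat_of_ord i) => //.
by rewrite mem_filter mem_index_iota i_gt0 ltnS ltnW ?i_cop.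
Qed.

Lemma uniq_prim_roots m : (0 < m)%N -> uniq (prim_roots m).
Proof.
move=> m_gt0; rewrite map_inj_in_uniq ?filter_uniq ?iota_uniq // => i j.
rewrite !mem_filter !mem_index_iota => /and3P[_ i_gt0 i_le] /and3P[_ j_gt0 j_le] /eqP.
rewrite (eq_prim_root_expr (zeta_prim_root m_gt0)) -(prednK i_gt0) -(prednK j_gt0).
rewrite -[i.-1.+1]addn1 -[j.-1.+1]addn1 eqn_modDr.
by rewrite !modn_small ?(leq_trans _ i_le, leq_trans _ j_le) ?prednK // => /eqP ->.
Qed.

Lemma uniq_unity_roots n : (0 < n)%N -> uniq (unity_roots n).
Proof.
move=> n_gt0; rewrite map_inj_in_uniq ?iota_uniq // => i j.
rewrite !mem_index_iota => i_lt j_lt /eqP.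
by rewrite (eq_prim_root_expr (zeta_prim_root n_gt0)) !modn_small // => /eqP.
Qed.

Lemma mem_unity_roots n z : (0 < n)%N -> z ^+ n = 1 -> z \in unity_roots n.
Proof.
move=> n_gt0 zn; have [i ->] := prim_rootP (zeta_prim_root n_gt0) zn.
by apply: map_f; rewrite mem_index_iota ltn_ord.
Qed.

(* Every [n]-th root of unity [zeta n ^+ b] is a primitive root of a unique
   order [e %| n], namely [e = n %/ gcdn b n]. *)
Lemma sum_prim_roots_divisors n (F : nat -> algC -> algC) : (0 < n)%N ->
  \sum_(e <- divisors n) \sum_(z <- prim_roots e) F e z =
  \sum_(0 <= b < n) F (n %/ gcdn b n)%N (zeta n ^+ b).
Proof.
move=> n_gt0; have zeta_prim := zeta_prim_root n_gt0.
transitivity (\sum_(e <- divisors n) \sum_(z <- unity_roots n | e.-primitive_root z) F e z).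
  apply: eq_big_seq => e; rewrite -dvdn_divisors // => e_dvd.
  have e_gt0 : (0 < e)%N := dvdn_gt0 n_gt0 e_dvd.
  rewrite -[RHS]big_filter; apply/perm_big/uniq_perm.
  - exact: uniq_prim_roots.
  - by rewrite filter_uniq // uniq_unity_roots.
  move=> z; rewrite mem_prim_roots // mem_filter.
  case: (boolP (e.-primitive_root z)) => //= z_prim; apply/esym/mem_unity_roots => //.
  by apply/eqP; rewrite -(prim_order_dvd z_prim).
rewrite (exchange_big_dep xpredT) //= big_map; apply: eq_bigr => b _.
have b_prim := exp_prim_root zeta_prim b.
rewrite (eq_bigl (pred1 (n %/ gcdn b n)%N)) => [|e]; last first.
  by apply/idP/eqP => [/eq_prim_root_order/(_ b_prim) | ->].
rewrite -big_filter filter_pred1_uniq ?big_seq1 ?divisors_uniq //.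
by rewrite -dvdn_divisors // dvdn_div // dvdn_gcdr.
Qed.

Lemma sum_ramanujan_divisors d x : (0 < d)%N ->
  \sum_(e <- divisors d) ramanujan e x%:Z = (d %| x)%:R * d%:R.
Proof.
move=> d_gt0; have zeta_prim := zeta_prim_root d_gt0.
under eq_bigr do rewrite ramanujanE.
rewrite (sum_prim_roots_divisors (fun _ z => z ^+ x)) //.
under eq_bigr do rewrite exprAC.
rewrite sum_unity_root_expr -?(prim_order_dvd zeta_prim) //.
by rewrite exprAC (prim_expr_order zeta_prim) expr1n.
Qed.

(* [c_d(x) = [d | x] d - sum_(e | d, e < d) c_e(x)], and both [d %| x] and
   [gcdn x e] for [e %| d] only depend on [gcdn x d]. *)
Lemma ramanujan_gcd d x x' : (0 < d)%N -> gcdn x d = gcdn x' d ->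
  ramanujan d x%:Z = ramanujan d x'%:Z.
Proof.
elim/ltn_ind: d x x' => d IHd x x' d_gt0 gcd_xx'.
have ramanujan_rec y : ramanujan d y%:Z =
    (d %| y)%:R * d%:R - \sum_(e <- divisors d | e != d) ramanujan e y%:Z.
  rewrite -(sum_ramanujan_divisors y d_gt0).
  by rewrite (bigD1_seq d) ?divisors_id ?divisors_uniq //= addrK.
have dvd_gcd y : (d %| y)%N = (d %| gcdn y d)%N by rewrite dvdn_gcd dvdnn andbT.
rewrite !ramanujan_rec (dvd_gcd x) gcd_xx' -dvd_gcd; congr (_ - _).
rewrite big_seq_cond [RHS]big_seq_cond; apply: eq_bigr => e /andP[].
rewrite -dvdn_divisors // => e_dvd e_neq_d.
have e_gt0 := dvdn_gt0 d_gt0 e_dvd.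
apply: IHd => //; first by rewrite ltn_neqAle e_neq_d dvdn_leq.
have gcd_dvd y : gcdn y e = gcdn (gcdn y d) e.
  by rewrite -gcdnA (gcdn_idPr e_dvd).
by rewrite gcd_dvd gcd_xx' -gcd_dvd.
Qed.

(* Regrouped along the [n]-th roots of unity, the sum becomes
   [sum_(b < n) c_d(b) v^b] with [v] primitive of order [d]; expanding [c_d]
   leaves geometric sums in [z * v], which vanish unless [z] is the inverse [w]
   of [v]. *)
Lemma sum_ramanujan_swap n d : (0 < n)%N -> (d %| n)%N ->
  \sum_(d' <- divisors n) ramanujan d (n %/ d')%:Z * ramanujan d' (n %/ d)%:Z = n%:R.
Proof.
move=> n_gt0 d_dvd; have d_gt0 := dvdn_gt0 n_gt0 d_dvd.
set v := zeta n ^+ (n %/ d).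
have v_prim : d.-primitive_root v := dvdn_prim_root (zeta_prim_root n_gt0) d_dvd.
under eq_bigr => d' _ do rewrite (ramanujanE d') big_distrr.
rewrite (sum_prim_roots_divisors (fun e z => ramanujan d (n %/ e)%:Z * z ^+ (n %/ d))) //=.
transitivity (\sum_(z <- prim_roots d) \sum_(0 <= b < n) (z * v) ^+ b).
  rewrite exchange_big; apply: eq_bigr => b _.
  rewrite divnA ?dvdn_gcdr // mulKn // (@ramanujan_gcd d _ b) //; last first.
    by rewrite -gcdnA (gcdn_idPr d_dvd).
  rewrite ramanujanE big_distrl; apply: eq_bigr => z _.
  by rewrite [RHS]exprMn exprAC.
set w := v ^+ d.-1.
have wv : w * v = 1 by rewrite -exprSr prednK // (prim_expr_order v_prim).
have w_prim : d.-primitive_root w by rewrite prim_root_exp_coprime // coprimePn.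
have unity_n z : d.-primitive_root z -> z ^+ n = 1.
  by move=> z_prim; rewrite -(divnK d_dvd) mulnC exprM (prim_expr_order z_prim) expr1n.
have v_neq0 : v != 0 by rewrite (prim_root_eq0 v_prim) -lt0n.
rewrite (eq_big_seq (fun z => if z == w then n%:R else 0)) => [|z]; last first.
  rewrite mem_prim_roots // => z_prim.
  rewrite sum_unity_root_expr ?exprMn ?unity_n ?mulr1 //.
  have -> : (z * v == 1) = (z == w) by rewrite -wv (inj_eq (mulIf v_neq0)).
  by case: (z == w); rewrite ?mul1r ?mul0r.
rewrite -big_mkcond -big_filter filter_pred1_uniq ?big_seq1 ?uniq_prim_roots //.
by rewrite mem_prim_roots.
Qed.

Theorem mainTheorem4 (n : nat) (hn : (1 <= n)%N) :
  \sum_(d <- divisors n) \sum_(d' <- divisors n)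
     ramanujan d (n %/ d')%:Z * ramanujan d' (n %/ d)%:Z
  = (n * tau n)%:R.
Proof.
rewrite (eq_big_seq (fun _ => n%:R)) => [|d]; last first.
  by rewrite -dvdn_divisors // => d_dvd; apply: sum_ramanujan_swap.
by rewrite (big_nth 0%N) big_mkord sumr_const card_ord natrM mulr_natr.
Qed.
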